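(* Let $f\in\mathbb{Z}_2[x]$. Let $\sigma$ be a cycle of $f_n$ ($n\ge1$) that grows, and suppose that some cycle $\tau$ of $f_m$, $m>n$, lying above $\sigma$ also grows (the cycles lying above $\sigma$ at intermediate levels may split). Then every cycle lying above $\tau$, at every level $>m$, grows; i.e. $\tau$ grows forever.
   Context: $f_n$ is the induced map on $\mathbb{Z}/2^n\mathbb{Z}$, $f_n(x\bmod 2^n)=f(x)\bmod 2^n$. A $k$-cycle of $f_n$ is a tuple $\sigma=(x_1,\dots,x_k)$ of distinct elements with $f_n(x_i)=x_{i+1}$, $f_n(x_k)=x_1$. A cycle $\tau$ of $f_m$, $m\ge n$, lies above $\sigma$ if every point of $\tau$ reduces mod $2^n$ into $\sigma$. The lifts of $\sigma$ are the cycles of $f_{n+1}$ in $\{y:y\bmod 2^n\in\sigma\}$; $\sigma$ grows if this set is a single cycle of length $2k$ and splits if it is the union of two cycles of length $k$. *)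

From mathcomp Require Import all_boot.
Set Implicit Arguments. Unset Strict Implicit. Unset Printing Implicit Defensive.

(* 2-adic integers Z_2 as the inverse limit of Z/2^n Z: compatible systems of
   residues a n in [0, 2^n). *)
Definition Z2 := {a : nat -> nat | forall n, a n < 2 ^ n /\ a n.+1 %% 2 ^ n = a n}.

Definition Z2res (a : Z2) (n : nat) : nat := proj1_sig a n.

Lemma Z2zero_proof : forall n, 0 < 2 ^ n /\ 0 %% 2 ^ n = 0.
Proof. by move=> n; rewrite expn_gt0 mod0n. Qed.

Definition Z2zero : Z2 := exist _ (fun _ => 0) Z2zero_proof.

(* A polynomial f in Z_2[x], given by its coefficient list
   (constant term first): f = \sum_i f_i x^i. *)
Definition polyZ2 := seq Z2.

(* The induced map f_n on Z/2^n Z, whose elements are represented by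
   the naturals 0 <= x < 2^n. *)
Definition fn (f : polyZ2) (n x : nat) : nat :=
  (\sum_(i < size f) Z2res (nth Z2zero f i) n * x ^ i) %% 2 ^ n.

Definition is_cycle (f : polyZ2) (n : nat) (s : seq nat) : Prop :=
  [/\ s != [::], uniq s, all (fun x => x < 2 ^ n) s &
      forall i, i < size s -> fn f n (nth 0 s i) = nth 0 s (i.+1 %% size s)].

Definition lies_above (n : nat) (sigma tau : seq nat) : Prop :=
  all (fun y => y %% 2 ^ n \in sigma) tau.

Definition grows (f : polyZ2) (n : nat) (sigma : seq nat) : Prop :=
  exists tau, [/\ is_cycle f n.+1 tau, size tau = 2 * size sigma &
    forall y, (y \in tau) = (y < 2 ^ n.+1) && (y %% 2 ^ n \in sigma)].

From mathcomp Require Import all_boot ssralg ring zify.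
Set Implicit Arguments. Unset Strict Implicit. Unset Printing Implicit Defensive.

(* Let k be the length of tau.  Linearising f at a point z gives
   f^j(z + 2^l u) = f^j(z) + 2^l u (f^j)'(z)  modulo 2^min(2l, l+2),
   where (f^j)'(z) mod 4 only depends on z mod 2.  Because sigma grows, f' is odd
   along sigma (otherwise the two lifts of a point of sigma would have the same
   image), and since 2|sigma| divides k, the derivative of f^(k 2^e) along tau
   is an odd square, hence 1 mod 4.  Because tau grows, f^k sends every point y
   above tau to its other lift y + 2^m mod 2^(m+1); applying f^(k 2^e) twice and
   linearising then shows by induction that f^(k 2^(e+1)) sends y to
   y + 2^(m+e+1) mod 2^(m+e+2).  At every level this forces the cycle through y
   to have length k 2^(e+1) and to exhaust the preimage of the cycle below. *)

Lemma Z2res_mod (c : Z2) M N : M <= N -> Z2res c N %% 2^M = Z2res c M.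
Proof.
move=> /subnKC <-; elim: (N - M) => [|k IH].
  by rewrite addn0 modn_small //; case: (proj2_sig c M).
rewrite addnS -(modn_dvdm _ (dvdn_exp2l 2 (leq_addr k M))).
by case: (proj2_sig c (M + k)) => _ ->.
Qed.

Lemma sum_eq_mod (I : finType) (F G : I -> nat) d :
  (forall i, F i = G i %[mod d]) -> \sum_i F i = \sum_i G i %[mod d].
Proof. by move=> FG; rewrite -modn_summ (eq_bigr _ (fun i _ => FG i)) modn_summ. Qed.

Lemma expnD_first_order z h i :
  exists Q, (z + h) ^ i = z ^ i + i * z ^ i.-1 * h + h ^ 2 * Q.
Proof.
elim: i => [|i [Q IH]]; first by exists 0; rewrite !expn0 mul0n muln0 !addn0.
exists (z * Q + i * z ^ i.-1 + h * Q); rewrite expnS IH.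
case: i IH => [|i] _; first by rewrite !expn0; ring.
rewrite !expnS /= -[i.+2]addn2 -[i.+1]addn1; ring.
Qed.

Lemma dvdn2_mul_pred i : 2 %| i * i.-1.
Proof. by case: i => [|i] //=; rewrite dvdn2 oddM /=; case: (odd i). Qed.

Lemma odd_sqr_mod4 x : odd x -> (x * x) %% 4 = 1.
Proof.
move=> ox; rewrite -(odd_double_half x) ox -muln2.
have -> : (1 + x./2 * 2) * (1 + x./2 * 2) = (x./2 * x./2 + x./2) * 4 + 1 by ring.
by rewrite modnMDl.
Qed.

Lemma dvdn_pow2_exact K e r : K %| r -> r %| K * 2^e.+1 -> ~~ (r %| K * 2^e) ->
  r = K * 2^e.+1.
Proof.
case/dvdnP=> q ->; have [->|K_gt0] := posnP K; first by rewrite !muln0 dvdnn.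
rewrite (mulnC q) !dvdn_pmul2l //.
case/(dvdn_pfactor _ _ (isT : prime 2)) => i le_ie ->; rewrite dvdn_Pexp2l // -ltnNge.
by move=> lt_ei; congr (_ * _ ^ _); apply/eqP; rewrite eqn_leq le_ie.
Qed.

Lemma lift_other j a b : a < 2^j.+1 -> b < 2^j.+1 -> a %% 2^j = b %% 2^j ->
  a != b -> a = (b + 2^j) %% 2^j.+1.
Proof.
rewrite expnSr; set P := 2^j; have P_gt0 : 0 < P by rewrite expn_gt0.
clearbody P => a_lt b_lt Eab neq_ab.
have qa : a %/ P < 2 by rewrite ltn_divLR // mulnC.
have qb : b %/ P < 2 by rewrite ltn_divLR // mulnC.
have r_lt : b %% P < P by rewrite ltn_mod.
move: neq_ab; rewrite (divn_eq a P) (divn_eq b P) Eab.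
move: (a %/ P) (b %/ P) (b %% P) qa qb r_lt => [|[|//]] [|[|//]] r _ _ r_lt;
  rewrite ?eqxx // !mul0n !mul1n add0n => _.
- have -> : P + r + P = 1 * (P * 2) + r by ring.
  by rewrite modnMDl modn_small // (leq_trans r_lt) // leq_pmulr.
- by rewrite addnC modn_small // muln2 -addnn ltn_add2r.
Qed.

Lemma lift_cases j a b z : a < 2^j.+1 -> b < 2^j.+1 -> z < 2^j.+1 ->
  a %% 2^j = b %% 2^j -> z %% 2^j = a %% 2^j -> a != b -> z = a \/ z = b.
Proof.
move=> a_lt b_lt z_lt Eab Eza neq_ab; have [->|neq_za] := eqVneq z a; first by left.
by right; rewrite (lift_other z_lt a_lt Eza neq_za) (lift_other b_lt a_lt) // eq_sym.
Qed.

Lemma lift_neq j y : y < 2^j.+1 -> (y + 2^j) %% 2^j.+1 != y.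
Proof.
move=> y_lt; rewrite -{2}(modn_small y_lt) -{2}(addn0 y) eqn_modDl mod0n.
by rewrite modn_small ?ltn_exp2l // expn_eq0.
Qed.

Lemma lift_odd j a b : a %% 2^j.+1 = (b + 2^j) %% 2^j.+1 ->
  exists2 u, odd u & a = b + 2^j * u %[mod 2^j.+2].
Proof.
move=> E; have dvd_j12 : 2^j.+1 %| 2^j.+2 by rewrite dvdn_exp2l.
set a' := a %% 2^j.+2; set c := (b + 2^j) %% 2^j.+2.
have a'_lt : a' < 2^j.+2 by rewrite ltn_mod expn_gt0.
have c_lt : c < 2^j.+2 by rewrite ltn_mod expn_gt0.
have Ea'c : a' %% 2^j.+1 = c %% 2^j.+1 by rewrite /a' /c !modn_dvdm.
have [Eac|neq_ac] := eqVneq a' c; first by exists 1; rewrite // muln1 -/a' Eac.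
exists 3 => //; rewrite -/a' (lift_other a'_lt c_lt Ea'c neq_ac) /c modnDml.
by congr (_ %% _); rewrite expnS; ring.
Qed.

Lemma shift_double_mod l y u A : odd u -> A %% 4 = 1 ->
  y + 2^l * u + 2^l * u * A = y + 2^l.+1 %[mod 2^l.+2].
Proof.
move=> odd_u A1; rewrite -(odd_double_half u) odd_u -muln2 (divn_eq A 4) A1 !expnS.
move: (u./2) (A %/ 4) (2^l) => s q P.
have -> : y + P * (true + s * 2) + P * (true + s * 2) * (q * 4 + 1) =
  (2 * s * q + s + q) * (2 * (2 * P)) + (y + 2 * P) by rewrite /=; ring.
by rewrite modnMDl.
Qed.

Section InducedMaps.

Variable f : polyZ2.

Definition coefn N i := Z2res (nth Z2zero f i) N.

Definition peval N z := \sum_(i < size f) coefn N i * z ^ i.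

Lemma fnE N z : fn f N z = peval N z %% 2^N.
Proof. by []. Qed.

Lemma peval_mod M N x : M <= N -> peval N x = peval M (x %% 2^M) %[mod 2^M].
Proof.
move=> le; apply: sum_eq_mod => i.
by rewrite -modnMml Z2res_mod // -[RHS]modnMmr modnXm modnMmr.
Qed.

Lemma fn_mod M N x : M <= N -> fn f N x %% 2^M = fn f M x.
Proof.
move=> le; rewrite !fnE (modn_dvdm _ (dvdn_exp2l 2 le)) (peval_mod x le).
by rewrite -(peval_mod x (leqnn M)).
Qed.

Lemma fn_modn N x : fn f N (x %% 2^N) = fn f N x.
Proof. by rewrite !fnE [RHS](peval_mod x (leqnn N)). Qed.

Lemma fn_lt N x : fn f N x < 2^N.
Proof. by rewrite fnE ltn_mod expn_gt0. Qed.

Lemma iter_fn_mod M N k x : M <= N ->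
  iter k (fn f N) x %% 2^M = iter k (fn f M) (x %% 2^M).
Proof.
move=> le; elim: k => [//|k IH].
by rewrite !iterS fn_mod // -fn_modn -IH fn_modn.
Qed.

Lemma iter_fn_modn N k x : iter k (fn f N) (x %% 2^N) = iter k (fn f N) x %% 2^N.
Proof. by rewrite iter_fn_mod. Qed.

Lemma iter_fn_lt N k x : x < 2^N -> iter k (fn f N) x < 2^N.
Proof. by case: k => [//|k] _; rewrite iterS fn_lt. Qed.

Lemma iter_fn_lt_pos N k x : 0 < k -> iter k (fn f N) x < 2^N.
Proof. by case: k => [//|k] _; rewrite iterS fn_lt. Qed.

(* A representative of the derivative f'(z) modulo 4: the coefficients are only
   read modulo 4. *)
Definition deriv4 z := \sum_(i < size f) i * coefn 2 i * z ^ i.-1.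

(* [N <= j + j] absorbs the quadratic term, [N <= j + 2] the error in the
   coefficients of [deriv4]. *)
Lemma peval_linear N j z u : 2 <= N -> N <= j + j -> N <= j + 2 ->
  peval N (z + 2^j * u) = peval N z + 2^j * u * deriv4 z %[mod 2^N].
Proof.
move=> N2 N2j Nj2; rewrite /peval /deriv4 big_distrr -big_split.
apply: sum_eq_mod => i /=.
have [Q ->] := expnD_first_order z (2^j * u) i.
set c := coefn N i; set c2 := coefn 2 i; set A := 2^j; set w := z ^ i.-1.
have Ec : c = c2 + c %/ 4 * 4.
  by rewrite addnC {1}(divn_eq c 4) /c2 /coefn -(Z2res_mod _ N2).
have H4 : 4 * A = 2^(j + 2 - N) * 2^N by rewrite /A -expnD subnK // expnD mulnC.
have HA : A * A = 2^(j + j - N) * 2^N by rewrite /A -!expnD subnK.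
move: (c %/ 4) Ec H4 HA => t -> H4 HA; clearbody A w.
have -> : (c2 + t * 4) * (z ^ i + i * w * (A * u) + (A * u) ^ 2 * Q) =
  (t * i * w * u * (4 * A) + (c2 + t * 4) * u ^ 2 * Q * (A * A))
  + ((c2 + t * 4) * z ^ i + A * u * (i * c2 * w)) by ring.
by rewrite H4 HA !mulnA -mulnDl modnMDl.
Qed.

Lemma deriv4_mod2 z : deriv4 z = deriv4 (z %% 2) %[mod 4].
Proof.
apply: sum_eq_mod => i.
set z0 := z %% 2; set w := z %/ 2.
have Ez : z = z0 + w * 2 by rewrite addnC /z0 /w -divn_eq.
have [Q EQ] := expnD_first_order z0 (w * 2) i.-1.
have [s Es] := dvdnP (dvdn2_mul_pred i).
rewrite {1}Ez EQ.
have -> : i * coefn 2 i * (z0 ^ i.-1 + i.-1 * z0 ^ i.-1.-1 * (w * 2) + (w * 2) ^ 2 * Q)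
  = (i * i.-1) * coefn 2 i * z0 ^ i.-1.-1 * w * 2
    + (i * coefn 2 i * w ^ 2 * Q) * 4 + i * coefn 2 i * z0 ^ i.-1 by ring.
rewrite Es.
have -> : s * 2 * coefn 2 i * z0 ^ i.-1.-1 * w * 2
  = (s * coefn 2 i * z0 ^ i.-1.-1 * w) * 4 by ring.
by rewrite -addnA modnMDl modnMDl.
Qed.

Lemma odd_deriv4 z : odd (deriv4 z) = odd (deriv4 (z %% 2)).
Proof.
have := congr1 (modn^~ 2) (deriv4_mod2 z).
by rewrite /= !(modn_dvdm _ (isT : 2 %| 4)) !modn2; do 2!case: odd.
Qed.

Lemma mul_pow2_mod4 j N a b c : N <= j + 2 -> a = b %[mod 4] ->
  2^j * c * a = 2^j * c * b %[mod 2^N].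
Proof.
move=> le Eab; rewrite -[LHS](modn_dvdm _ (dvdn_exp2l 2 le)).
rewrite -[RHS](modn_dvdm _ (dvdn_exp2l 2 le)) expnD -!mulnA -!muln_modr.
by rewrite -(modnMmr c a) (Eab : a %% 2^2 = b %% 2^2) modnMmr.
Qed.

(* The derivative of the k-th iterate of f at w, modulo 4 (chain rule); it only
   depends on w modulo 2. *)
Definition orbit_deriv4 k w := \prod_(i < k) deriv4 (iter i (fn f 1) w).

Lemma orbit_deriv4D a b w :
  orbit_deriv4 (a + b) w = orbit_deriv4 a w * orbit_deriv4 b (iter a (fn f 1) w).
Proof.
rewrite /orbit_deriv4 big_split_ord /=; congr (_ * _).
by apply: eq_bigr => i _; rewrite /= -iterD addnC.
Qed.

Lemma iter_fn_linear N j k z u : 2 <= N -> N <= j + j -> N <= j + 2 ->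
  iter k (fn f N) (z + 2^j * u)
    = iter k (fn f N) z + 2^j * u * orbit_deriv4 k (z %% 2) %[mod 2^N].
Proof.
move=> N2 N2j Nj2; elim: k => [|k IH].
  by rewrite /orbit_deriv4 big_ord0 muln1.
rewrite !iterS; set w := iter k (fn f N) z.
rewrite -fn_modn IH fn_modn !fnE modn_mod modnDml -(mulnA (2^j)) peval_linear //.
have Ew : iter k (fn f 1) (z %% 2) = w %% 2.
  by rewrite -(expn1 2) -(iter_fn_mod k z (ltnW N2)).
rewrite /orbit_deriv4 big_ord_recr /= Ew -/(orbit_deriv4 k (z %% 2)).
rewrite -modnDmr -[RHS]modnDmr [in RHS]mulnA -(mulnA (2^j) u).
by rewrite (mul_pow2_mod4 _ Nj2 (deriv4_mod2 w)).
Qed.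

Lemma cycle_size_gt0 N s : is_cycle f N s -> 0 < size s.
Proof. by case; case: s. Qed.

Lemma cycle_lt N s x : is_cycle f N s -> x \in s -> x < 2^N.
Proof. by case=> _ _ /allP lt_s _ /lt_s. Qed.

Lemma cycle_iter N s i k : is_cycle f N s -> i < size s ->
  iter k (fn f N) (nth 0 s i) = nth 0 s ((i + k) %% size s).
Proof.
move=> C lt_i; have s_gt0 := cycle_size_gt0 C; case: C => _ _ _ fs.
elim: k => [|k IH]; first by rewrite addn0 modn_small.
by rewrite iterS IH fs ?ltn_mod // -addn1 modnDml -addnA addn1.
Qed.

Lemma cycle_mem N s x k : is_cycle f N s -> x \in s -> iter k (fn f N) x \in s.
Proof.
move=> C xs; rewrite -(nth_index 0 xs) cycle_iter ?index_mem //.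
by rewrite mem_nth // ltn_mod (cycle_size_gt0 C).
Qed.

Lemma cycle_iter_id N s x k : is_cycle f N s -> x \in s ->
  (iter k (fn f N) x == x) = (size s %| k).
Proof.
move=> C xs; have s_gt0 := cycle_size_gt0 C; have [_ Us _ _] := C.
have ix : index x s < size s by rewrite index_mem.
rewrite -{1 2}(nth_index 0 xs) cycle_iter // nth_uniq ?ltn_mod //.
by rewrite -{2}(modn_small ix) -{2}(addn0 (index x s)) eqn_modDl mod0n.
Qed.

Lemma cycle_orbit N s x z : is_cycle f N s -> x \in s -> z \in s ->
  exists2 t, t < size s & iter t (fn f N) x = z.
Proof.
move=> C xs zs; have s_gt0 := cycle_size_gt0 C.
have ix : index x s < size s by rewrite index_mem.
have iz : index z s < size s by rewrite index_mem.
exists ((index z s + (size s - index x s)) %% size s); first by rewrite ltn_mod.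
rewrite -{2}(nth_index 0 xs) cycle_iter // modnDmr addnCA subnKC 1?ltnW //.
by rewrite modnDr modn_small // nth_index.
Qed.

Lemma cycle_fn_inj N s a b : is_cycle f N s -> a \in s -> b \in s ->
  fn f N a = fn f N b -> a = b.
Proof.
move=> C sa sb E; have s_gt0 := cycle_size_gt0 C; have [_ Us _ _] := C.
have ia : index a s < size s by rewrite index_mem.
have ib : index b s < size s by rewrite index_mem.
have := cycle_iter 1 C ia; have := cycle_iter 1 C ib.
rewrite /= !nth_index // E => -> /eqP.
rewrite nth_uniq ?ltn_mod // eqn_modDr !modn_small // => /eqP Eab.
by rewrite -(nth_index 0 sa) -(nth_index 0 sb) Eab.
Qed.

Lemma iter_cycle_mod M N s x k : is_cycle f N s -> x \in s -> M <= N ->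
  size s %| k -> iter k (fn f M) (x %% 2^M) = x %% 2^M.
Proof.
move=> C xs le dk; rewrite -(iter_fn_mod k x le).
by have /eqP -> : iter k (fn f N) x == x by rewrite (cycle_iter_id _ C).
Qed.

Lemma size_cycle_above_dvd M N s c x : is_cycle f M s -> is_cycle f N c ->
  M <= N -> x \in c -> x %% 2^M \in s -> size s %| size c.
Proof.
by move=> Cs Cc le xc xs; rewrite -(cycle_iter_id _ Cs xs) (iter_cycle_mod Cc).
Qed.

Definition shifts L k y := iter k (fn f L.+1) y = (y + 2^L) %% 2^L.+1.

Lemma shifts_iter_id L k y : y < 2^L -> shifts L k y -> iter k (fn f L) y = y.
Proof.
move=> y_lt sh; rewrite -{1}(modn_small y_lt) -(iter_fn_mod k y (leqnSn L)) sh.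
by rewrite (modn_dvdm _ (dvdn_exp2l 2 (leqnSn L))) modnDr modn_small.
Qed.

Lemma shifts_iter_neq L k y : y < 2^L.+1 -> shifts L k y -> iter k (fn f L.+1) y != y.
Proof. by move=> y_lt ->; apply: lift_neq. Qed.

Lemma is_cycle_traject N p y : y < 2^N -> 0 < p -> iter p (fn f N) y = y ->
  (forall t, 0 < t < p -> iter t (fn f N) y != y) ->
  is_cycle f N (traject (fn f N) y p).
Proof.
set F := fn f N => y_lt p_gt0 ret no_ret.
have per t : iter t F y = iter (t %% p) F y.
  rewrite {1}(divn_eq t p) addnC iterD; congr iter.
  by elim: (t %/ p) => [//|q IH]; rewrite mulSn iterD IH ret.
split.
- by case: p p_gt0 {ret no_ret per}.
- case: p p_gt0 ret no_ret {per} => [//|p] _ ret no_ret.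
  rewrite looping_uniq; apply/trajectP => -[i lt_ip E].
  have /eqP[] := no_ret i.+1 lt_ip.
  by rewrite iterS -E -iterS ret.
- by apply/allP => z /trajectP[i _ ->]; apply: iter_fn_lt.
- move=> i; rewrite size_traject => lt_ip.
  by rewrite !(set_nth_default y) ?size_traject ?ltn_mod // !nth_traject ?ltn_mod // -per.
Qed.

Lemma grows_of_shifts L c y : is_cycle f L c -> y \in c ->
  shifts L (size c) y -> shifts L.+1 (size c * 2) y -> grows f L c.
Proof.
move=> C yc sh1 sh2; set k := size c; set F := fn f L.+1.
have k_gt0 : 0 < k := cycle_size_gt0 C.
have y_lt : y < 2^L := cycle_lt C yc.
have y_lt1 : y < 2^L.+1 by rewrite (leq_trans y_lt) // leq_exp2l.
have red t : iter t F y %% 2^L = iter t (fn f L) y.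
  by rewrite iter_fn_mod // modn_small.
have no_ret t : 0 < t < k * 2 -> iter t F y != y.
  case/andP=> t_gt0 t_lt; apply/eqP => ret.
  have /dvdnP[q Et] : k %| t by rewrite -(cycle_iter_id _ C yc) -red ret modn_small.
  move: t_gt0 t_lt ret; rewrite Et (mulnC k) ltn_pmul2r //.
  case: q {Et} => [|[|]] // _ _; rewrite mul1n; apply/eqP.
  exact: shifts_iter_neq sh1.
have Ct : is_cycle f L.+1 (traject F y (k * 2)).
  by apply: is_cycle_traject; rewrite ?muln_gt0 ?k_gt0 // (shifts_iter_id y_lt1 sh2).
exists (traject F y (k * 2)); split => //; first by rewrite size_traject mulnC.
move=> z; apply/trajectP/andP => [[i _ ->]|[z_lt zc]].
  by rewrite iter_fn_lt // red cycle_mem.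
have [t t_lt Et] := cycle_orbit C yc zc.
have [_ Ut _ _] := Ct.
have lifts_neq : iter t F y != iter (t + k) F y.
  by rewrite -!(nth_traject F (_ : _ < k * 2) y) ?nth_uniq ?size_traject //; lia.
have red_k : iter (t + k) F y %% 2^L = iter t F y %% 2^L.
  have /eqP ret_k : iter k (fn f L) y == y by rewrite (cycle_iter_id _ C yc).
  by rewrite !red iterD ret_k.
case: (lift_cases (iter_fn_lt t y_lt1) (iter_fn_lt (t + k) y_lt1) z_lt (esym red_k)
        (etrans (esym Et) (esym (red t))) lifts_neq) => ->.
- by exists t => //; lia.
- by exists (t + k) => //; lia.
Qed.

Lemma size_cycle_of_shifts L K e c y : is_cycle f L.+1 c -> y \in c ->
  K %| size c -> shifts L (K * 2^e) y -> shifts L.+1 (K * 2^e.+1) y ->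
  size c = K * 2^e.+1.
Proof.
move=> C yc dvd_Kc sh1 sh2; have y_lt := cycle_lt C yc.
apply: dvdn_pow2_exact => //; rewrite -(cycle_iter_id _ C yc).
- by rewrite (shifts_iter_id y_lt sh2).
- by rewrite (shifts_iter_neq y_lt sh1).
Qed.

Lemma deriv4_odd_of_grows n s p : 1 <= n -> grows f n s -> p %% 2^n \in s ->
  odd (deriv4 p).
Proof.
move=> n_gt0 [s1 [C1 _ mem_s1]] ps.
have dvd_n : 2^n %| 2^n.+1 := dvdn_exp2l 2 (leqnSn n).
set q := p %% 2^n.+1; set q' := (q + 2^n) %% 2^n.+1.
have q_lt : q < 2^n.+1 by rewrite ltn_mod expn_gt0.
have q_s1 : q \in s1 by rewrite mem_s1 q_lt /q modn_dvdm.
have q'_s1 : q' \in s1.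
  by rewrite mem_s1 ltn_mod expn_gt0 /q' modn_dvdm // modnDr /q modn_dvdm.
have -> : odd (deriv4 p) = odd (deriv4 q).
  by rewrite odd_deriv4 [RHS]odd_deriv4 /q modn_dvdm // expnS dvdn_mulr.
apply: contraT => even_q.
(* Were f'(q) even, q and its other lift q' would have the same image. *)
have : fn f n.+1 q' = fn f n.+1 q.
  rewrite /q' fn_modn !fnE -[2^n]muln1 (peval_linear _ _ (n_gt0 : 2 <= n.+1)) ?addn2 //;
    last by rewrite -addn1 leq_add2l.
  rewrite -(odd_double_half (deriv4 q)) (negbTE even_q) add0n -muln2.
  by rewrite muln1 mulnA mulnAC -expnSr -modnDmr modnMr addn0.
by move/(cycle_fn_inj C1 q'_s1 q_s1)/eqP; rewrite (negbTE (lift_neq q_lt)).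
Qed.

Lemma orbit_deriv4_odd n s y k : 1 <= n -> is_cycle f n s -> grows f n s ->
  y %% 2^n \in s -> odd (orbit_deriv4 k (y %% 2)).
Proof.
move=> n_gt0 C G ys; rewrite /orbit_deriv4.
apply: (big_ind odd) => // [a b|i _]; first by rewrite oddM => -> ->.
have -> : iter i (fn f 1) (y %% 2) = iter i (fn f n) (y %% 2^n) %% 2^1.
  by rewrite iter_fn_mod // modn_dvdm // dvdn_exp2l.
rewrite -odd_deriv4; apply: (deriv4_odd_of_grows n_gt0 G).
by rewrite modn_small ?(cycle_lt C) // cycle_mem.
Qed.

Lemma orbit_deriv4_twice_mod4 a w : iter a (fn f 1) w = w ->
  odd (orbit_deriv4 a w) -> orbit_deriv4 (a + a) w %% 4 = 1.
Proof. by move=> ret odd_a; rewrite orbit_deriv4D ret odd_sqr_mod4. Qed.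

Lemma shifts_of_grows m t y : is_cycle f m t -> grows f m t -> y %% 2^m \in t ->
  shifts m (size t) y.
Proof.
move=> C [t1 [C1 size_t1 mem_t1]] yt; have t_gt0 := cycle_size_gt0 C.
have dvd_m : 2^m %| 2^m.+1 := dvdn_exp2l 2 (leqnSn m).
set x := y %% 2^m.+1; set a := iter (size t) (fn f m.+1) x.
have x_lt : x < 2^m.+1 by rewrite ltn_mod expn_gt0.
have x_t1 : x \in t1 by rewrite mem_t1 x_lt /x modn_dvdm.
have neq_ax : a != x.
  by rewrite (cycle_iter_id _ C1 x_t1) size_t1 gtnNdvd //; lia.
have Eax : a %% 2^m = x %% 2^m.
  have /eqP ret : iter (size t) (fn f m) (y %% 2^m) == y %% 2^m.
    by rewrite (cycle_iter_id _ C yt).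
  by rewrite iter_fn_mod // /x !modn_dvdm // ret.
rewrite /shifts -(modn_small (iter_fn_lt_pos _ _ t_gt0)) -iter_fn_modn.
by rewrite (lift_other (iter_fn_lt_pos _ _ t_gt0) x_lt Eax neq_ax) modnDml.
Qed.

Lemma shifts_double L k y : 2 <= L -> 0 < k ->
  orbit_deriv4 k (y %% 2) %% 4 = 1 -> shifts L k y -> shifts L.+1 (k * 2) y.
Proof.
move=> L2 k_gt0 D1 sh; set G := iter k (fn f L.+2).
have GyE : G y %% 2^L.+1 = (y + 2^L) %% 2^L.+1.
  by rewrite /G iter_fn_mod // iter_fn_modn sh modn_mod.
have [u odd_u Eu] := lift_odd GyE.
have kk_gt0 : 0 < k * 2 by rewrite muln_gt0 k_gt0.
rewrite /shifts -(modn_small (iter_fn_lt_pos _ _ kk_gt0)) muln2 -addnn iterD -/G.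
rewrite -iter_fn_modn Eu iter_fn_modn (iter_fn_linear _ _ _ (_ : 2 <= L.+2)) //;
  try lia.
by rewrite -modnDml Eu modnDml shift_double_mod.
Qed.

Lemma shifts_above_grows m t y : 2 <= m -> is_cycle f m t -> grows f m t ->
  y %% 2^m \in t -> (forall e, orbit_deriv4 (size t * 2^e) (y %% 2) %% 4 = 1) ->
  forall e, shifts (m + e) (size t * 2^e) y.
Proof.
move=> m2 C G yt D1; elim=> [|e IH].
  by rewrite addn0 muln1; apply: shifts_of_grows.
rewrite addnS expnSr mulnA; apply: shifts_double => //.
- by rewrite (leq_trans m2) ?leq_addr.
- by rewrite muln_gt0 expn_gt0 (cycle_size_gt0 C).
Qed.

End InducedMaps.

Theorem corollary3p9 (f : polyZ2) (n m : nat) (sigma tau : seq nat) :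
  1 <= n -> n < m ->
  is_cycle f n sigma -> grows f n sigma ->
  is_cycle f m tau -> lies_above n sigma tau -> grows f m tau ->
  forall (m' : nat) (rho : seq nat), m < m' ->
    is_cycle f m' rho -> lies_above m tau rho -> grows f m' rho.
Proof.
move=> n_gt0 lt_nm Cs Gs Ct above_st Gt m' rho lt_mm' Cr above_tr.
set y := nth 0 rho 0.
have y_rho : y \in rho := mem_nth 0 (cycle_size_gt0 Cr).
have y_tau : y %% 2^m \in tau := allP above_tr y y_rho.
have y_sigma : y %% 2^n \in sigma.
  by rewrite -(modn_dvdm y (dvdn_exp2l 2 (ltnW lt_nm))); apply: (allP above_st).
have /dvdnP[c size_tau] : size sigma * 2 %| size tau.
  have [s1 [Cs1 size_s1 mem_s1]] := Gs.
  rewrite mulnC -size_s1; apply: (size_cycle_above_dvd Cs1 Ct lt_nm y_tau).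
  by rewrite mem_s1 ltn_mod expn_gt0 !modn_dvdm ?dvdn_exp2l // ltnW.
have deriv_1 e : orbit_deriv4 f (size tau * 2^e) (y %% 2) %% 4 = 1.
  have -> : size tau * 2^e = c * 2^e * size sigma + c * 2^e * size sigma.
    by rewrite size_tau; ring.
  apply: orbit_deriv4_twice_mod4; last exact: orbit_deriv4_odd n_gt0 Cs Gs y_sigma.
  have := iter_cycle_mod Cs y_sigma n_gt0 (dvdn_mull (c * 2^e) (dvdnn (size sigma))).
  by rewrite !modn_dvdm ?dvdn_exp2l.
have sh := shifts_above_grows (leq_ltn_trans n_gt0 lt_nm) Ct Gt y_tau deriv_1.
have [e Em'] : exists e, m' = (m + e).+1 by exists (m' - m).-1; lia.
subst m'.
have sh1 := sh e.+1; have sh2 := sh e.+2; rewrite !addnS in sh1 sh2.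
have size_rho : size rho = size tau * 2^e.+1.
  apply: (size_cycle_of_shifts Cr y_rho _ (sh e) sh1).
  exact: (size_cycle_above_dvd Ct Cr (ltnW lt_mm') y_rho y_tau).
by apply: (grows_of_shifts Cr y_rho); rewrite size_rho // -mulnA -expnSr.
Qed.
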